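(* Let $P,Q\in\Gamma_n$ and $0<r\le R$ with $r\le p_i/q_i\le R$ for all $i$. Let $s,t\in\mathbb{R}$. If $s\ge-1$ and $t\ge-1$, then $$r^{t+1}\Big(\frac{r+1}{2}\Big)^{s-t}\Omega_t(P\|Q)\le\Omega_s(Q\|P)\le R^{t+1}\Big(\frac{R+1}{2}\Big)^{s-t}\Omega_t(P\|Q).$$ If $s\le-1$ and $t\le-1$, then $$R^{t+1}\Big(\frac{R+1}{2}\Big)^{s-t}\Omega_t(P\|Q)\le\Omega_s(Q\|P)\le r^{t+1}\Big(\frac{r+1}{2}\Big)^{s-t}\Omega_t(P\|Q).$$
   Context: $\Gamma_n=\{P=(p_1,\dots,p_n): p_i>0,\ \sum_i p_i=1\}$, $n\ge2$. For $P,Q\in\Gamma_n$ and $s\in\mathbb{R}$: $\Omega_s(P\|Q)=[s(s-1)]^{-1}\big[\sum_i p_i\big(\frac{p_i+q_i}{2p_i}\big)^s-1\big]$ for $s\ne0,1$; $\Omega_0(P\|Q)=\sum_i p_i\ln\frac{2p_i}{p_i+q_i}$; $\Omega_1(P\|Q)=\sum_i\frac{p_i+q_i}{2}\ln\frac{p_i+q_i}{2p_i}$. $\Omega_s(Q\|P)$ is obtained by interchanging $p_i$ and $q_i$ in these formulas. *)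

From HB Require Import structures.
From mathcomp Require Import all_boot all_order all_algebra.
From mathcomp Require Import all_classical all_reals all_analysis.
Set Implicit Arguments. Unset Strict Implicit. Unset Printing Implicit Defensive.
Import Order.TTheory GRing.Theory Num.Theory.
Local Open Scope ring_scope.

Definition in_Gamma (R : realType) (n : nat) (p : 'I_n -> R) : Prop :=
  (forall i, 0 < p i) /\ \sum_(i < n) p i = 1.

Definition Omega (R : realType) (n : nat) (s : R) (p q : 'I_n -> R) : R :=
  if s == 0 then \sum_(i < n) p i * ln (2 * p i / (p i + q i))
  else if s == 1 then \sum_(i < n) (p i + q i) / 2 * ln ((p i + q i) / (2 * p i))
  else (s * (s - 1))^-1 *
       (\sum_(i < n) p i * powR ((p i + q i) / (2 * p i)) s - 1).

From HB Require Import structures.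
From mathcomp Require Import all_boot all_order all_algebra.
From mathcomp Require Import all_classical all_reals all_analysis.
From mathcomp Require Import ring lra.
Import Order.TTheory GRing.Theory Num.Theory.
Local Open Scope ring_scope.

(* Writing x_i = p_i / q_i, both divergences are Csiszar sums \sum_i q_i f(x_i):
   Omega_s(Q||P) with f = psi_s, psi_s(x) = phi_s((x + 1) / 2), and Omega_t(P||Q)
   with the perspective F_t(x) = x psi_t(1/x).  Their second derivatives are
   psi_s''(x) = w(x) F_t''(x) with w(x) = x^(t+1) ((x + 1) / 2)^(s-t), and
   F_t'' >= 0.  If m <= w on [r, R], then psi_s - m F_t is convex on [r, R] and
   vanishes at 1, so it lies above its tangent at 1, whose Csiszar sum is 0
   because \sum p_i = \sum q_i; hence m Omega_t(P||Q) <= Omega_s(Q||P), and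
   symmetrically for m >= w.  Finally w(x) = (2x / (x + 1))^(t+1) ((x + 1) / 2)^(s+1)
   is nondecreasing when s, t >= -1 and nonincreasing when s, t <= -1, so its
   extreme values on [r, R] are taken at the endpoints. *)

Lemma is_derive1_mul {R : realType} {f g : R -> R} {x df dg : R} :
  is_derive x 1 f df -> is_derive x 1 g dg ->
  is_derive x 1 (fun y => f y * g y) (f x * dg + g x * df).
Proof. exact: is_deriveM. Qed.

Lemma is_derive1_inv {R : realType} {x : R} : x != 0 ->
  is_derive x 1 (fun y : R => y^-1) (- x ^- 2).
Proof.
move=> x0; apply: (is_derive_eq (is_deriveV (f := id) x0 (is_derive_id x 1))).
by rewrite scaler1.
Qed.

Section tangent_line.
Context {R : realType}.
Variables (f df ddf : R -> R) (a b : R).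
Hypothesis f_df : {in `[a, b], forall y : R, is_derive y 1 f (df y)}.
Hypothesis df_ddf : {in `[a, b], forall y : R, is_derive y 1 df (ddf y)}.
Hypothesis ddf_ge0 : {in `[a, b], forall y : R, 0 <= ddf y}.

Let in_ab u v y : a <= u -> v <= b -> y \in `[u, v] -> y \in `[a, b].
Proof. by rewrite !in_itv /= => au vb /andP[uy yv]; apply/andP; split; lra. Qed.

Let in_ab_oo u v y : a <= u -> v <= b -> y \in `]u, v[ -> y \in `[a, b].
Proof. by rewrite !in_itv /= => au vb /andP[uy yv]; apply/andP; split; lra. Qed.

Lemma derive_nondecreasing : {in `[a, b] &, {homo df : x y / x <= y}}.
Proof.
have in_oo y : y \in `]a, b[ -> y \in `[a, b] := in_ab_oo _ _ _ (lexx a) (lexx b).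
apply: ger0_derive1_le_cc.
- by move=> y /in_oo /df_ddf [].
- by move=> y /in_oo yab; rewrite derive1E; case: (df_ddf _ yab) => _ ->; apply: ddf_ge0.
- by apply: derivable_within_continuous => y /df_ddf [].
Qed.

Let mean_value u v : a <= u -> u <= v -> v <= b ->
  exists2 z, z \in `[u, v] & f v - f u = df z * (v - u).
Proof.
move=> au uv vb; apply: MVT_segment => // [z /(in_ab_oo _ _ _ au vb) /f_df //|].
by apply: derivable_within_continuous => z /(in_ab _ _ _ au vb) /f_df [].
Qed.

Lemma tangent_le c x : c \in `[a, b] -> x \in `[a, b] -> f c + df c * (x - c) <= f x.
Proof.
move=> cab xab; have := cab; have := xab; rewrite !in_itv /= => /andP[ax xb] /andP[ac cb].
have [cx|xc] := leP c x.
- have [z /[dup] zcx /(in_ab _ _ _ ac xb) zab fxc] := mean_value _ _ ac cx xb.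
  have dfcz : df c <= df z by apply: derive_nondecreasing; rewrite // (itvP zcx).
  by rewrite -lerBrDl fxc ler_wpM2r // subr_ge0.
- have [z /[dup] zxc /(in_ab _ _ _ ax cb) zab fcx] := mean_value _ _ ax (ltW xc) cb.
  have dfzc : df z <= df c by apply: derive_nondecreasing; rewrite // (itvP zxc).
  have : df z * (c - x) <= df c * (c - x) by rewrite ler_wpM2r // subr_ge0 ltW.
  rewrite -fcx; lra.
Qed.

End tangent_line.
Arguments tangent_le {R f df ddf a b} _ _ _ {c x}.

Section csiszar_sum.
Context {R : realType} {n : nat} {p q : 'I_n -> R} {r Rb : R}.
Hypotheses (Gp : in_Gamma p) (Gq : in_Gamma q).
Hypothesis ratio_in : forall i, r <= p i / q i <= Rb.

Let mul_ratio i : q i * (p i / q i) = p i.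
Proof. by rewrite mulrCA divff ?mulr1 // gt_eqF //; case: Gq. Qed.

Lemma ratio_range_1 : r <= 1 <= Rb.
Proof.
case: Gp Gq => [_ sp] [q_gt0 sq].
have lb c : (forall i, c <= p i / q i) -> c <= 1.
  move=> c_le; rewrite -sp -[c]mulr1 -sq mulr_sumr ler_sum // => i _.
  by rewrite -(mul_ratio i) [c * _]mulrC ler_pM2l.
have ub c : (forall i, p i / q i <= c) -> 1 <= c.
  move=> le_c; rewrite -sp -[c]mulr1 -sq mulr_sumr ler_sum // => i _.
  by rewrite -(mul_ratio i) [c * _]mulrC ler_pM2l.
by rewrite lb ?ub // => i; case/andP: (ratio_in i).
Qed.

Lemma csiszar_sum_ge0 (h dh ddh : R -> R) :
  {in `[r, Rb], forall y : R, is_derive y 1 h (dh y)} ->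
  {in `[r, Rb], forall y : R, is_derive y 1 dh (ddh y)} ->
  {in `[r, Rb], forall y : R, 0 <= ddh y} -> h 1 = 0 ->
  0 <= \sum_(i < n) q i * h (p i / q i).
Proof.
move=> h_dh dh_ddh ddh_ge0 h1; case: Gp Gq => [_ sp] [q_gt0 sq].
have one_in : (1 : R) \in `[r, Rb] by rewrite in_itv /= ratio_range_1.
have tangent i : dh 1 * (p i / q i - 1) <= h (p i / q i).
  have xi_in : p i / q i \in `[r, Rb] by rewrite in_itv /= ratio_in.
  by have := tangent_le h_dh dh_ddh ddh_ge0 one_in xi_in; rewrite h1 add0r.
have sum_tangent : \sum_(i < n) q i * (dh 1 * (p i / q i - 1)) = 0.
  rewrite (eq_bigr (fun i => dh 1 * (p i - q i))) => [|i _].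
    by rewrite -mulr_sumr sumrB sp sq subrr mulr0.
  by rewrite mulrCA mulrBr mul_ratio mulr1.
rewrite -[leLHS]sum_tangent; apply: ler_sum => i _.
by rewrite ler_pM2l ?q_gt0 ?tangent.
Qed.

Lemma csiszar_sum_le {f df ddf g dg ddg : R -> R} :
  {in `[r, Rb], forall y : R, is_derive y 1 f (df y)} ->
  {in `[r, Rb], forall y : R, is_derive y 1 df (ddf y)} ->
  {in `[r, Rb], forall y : R, is_derive y 1 g (dg y)} ->
  {in `[r, Rb], forall y : R, is_derive y 1 dg (ddg y)} ->
  {in `[r, Rb], forall y : R, ddf y <= ddg y} -> f 1 = g 1 ->
  \sum_(i < n) q i * f (p i / q i) <= \sum_(i < n) q i * g (p i / q i).
Proof.
move=> f_df df_ddf g_dg dg_ddg ddf_le fg1.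
rewrite -subr_ge0 -sumrB; under eq_bigr do rewrite -mulrBr.
apply: (csiszar_sum_ge0 (fun y => g y - f y) (fun y => dg y - df y)
  (fun y => ddg y - ddf y)).
- by move=> y yr; apply: is_deriveB; [apply: g_dg | apply: f_df].
- by move=> y yr; apply: is_deriveB; [apply: dg_ddg | apply: df_ddf].
- by move=> y yr; rewrite subr_ge0 ddf_le.
- by rewrite fg1 subrr.
Qed.

End csiszar_sum.

Section perspective.
Context {R : realType}.
Variables (f df ddf : R -> R).
Hypothesis f_df : forall y : R, 0 < y -> is_derive y 1 f (df y).
Hypothesis df_ddf : forall y : R, 0 < y -> is_derive y 1 df (ddf y).

Definition perspective (g : R -> R) (x : R) := x * g x^-1.

Let is_derive_at_inv (g dg : R -> R) (x : R) : 0 < x ->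
  (forall y : R, 0 < y -> is_derive y 1 g (dg y)) ->
  is_derive x 1 (fun y => g y^-1) (- dg x^-1 / x ^+ 2).
Proof.
move=> x0 g_dg; have xV0 : 0 < x^-1 by rewrite invr_gt0.
apply: (is_derive_eq (is_derive1_comp (g_dg _ xV0) (is_derive1_inv (lt0r_neq0 x0)))).
by rewrite mulrN mulNr.
Qed.

Lemma is_derive_perspective (x : R) : 0 < x ->
  is_derive x 1 (perspective f) (f x^-1 - df x^-1 / x).
Proof.
move=> x0; rewrite /perspective.
apply: (is_derive_eq (is_derive1_mul (is_derive_id x 1) (is_derive_at_inv _ _ _ x0 f_df))).
by rewrite /=; field; rewrite lt0r_neq0.
Qed.

Lemma is_derive_perspective' (x : R) : 0 < x ->
  is_derive x 1 (fun y => f y^-1 - df y^-1 / y) (ddf x^-1 / x ^+ 3).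
Proof.
move=> x0; have x0' := lt0r_neq0 x0.
apply: (is_derive_eq (is_deriveB (is_derive_at_inv _ _ _ x0 f_df)
  (is_derive1_mul (is_derive_at_inv _ _ _ x0 df_ddf) (is_derive1_inv x0')))).
by rewrite /=; field.
Qed.

End perspective.
Arguments is_derive_perspective {R f df} _ {x}.
Arguments is_derive_perspective' {R f df ddf} _ _ {x}.

Section generator.
Context {R : realType}.
Implicit Types (s u : R).

Definition phi s : R -> R :=
  if s == 0 then fun u => - ln u
  else if s == 1 then fun u => u * ln u
  else fun u => (powR u s - 1) / (s * (s - 1)).

Definition dphi s : R -> R :=
  if s == 0 then fun u => - u^-1
  else if s == 1 then fun u => ln u + 1
  else fun u => powR u (s - 1) / (s - 1).

Lemma phi1 s : phi s 1 = 0.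
Proof.
rewrite /phi; case: eqP => _; first by rewrite ln1 oppr0.
by case: eqP => _; rewrite ?ln1 ?mulr0 // powR1 subrr mul0r.
Qed.

Lemma is_derive_phi s {u} : 0 < u -> is_derive u 1 (phi s) (dphi s u).
Proof.
move=> u0; have ? := is_derive1_ln u0; have ? := is_derive1_powR s u0.
rewrite /phi /dphi; case: eqP => [_|/eqP s0]; [|case: eqP => [_|/eqP s1]];
  apply: is_derive_eq.
- by [].
- by rewrite -[_ *: _]/(_ * _) divff ?gt_eqF // scaler1 addrC.
- have s1' : s - 1 != 0 by rewrite subr_eq0.
  by rewrite scaler0 add0r subr0 -[_ *: _]/(_ * _); field; rewrite s0 s1'.
Qed.

Lemma is_derive_dphi s {u} : 0 < u -> is_derive u 1 (dphi s) (powR u (s - 2)).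
Proof.
move=> u0; have ? := is_derive1_ln u0; have ? := is_derive1_powR (s - 1) u0.
have ? := is_derive1_inv (lt0r_neq0 u0).
rewrite /dphi; case: eqP => [->|/eqP s0]; [|case: eqP => [->|/eqP s1]];
  apply: is_derive_eq.
- by rewrite opprK sub0r (powR_invn 2) ?ltW.
- by rewrite addr0 (_ : 1 - 2 = -1) ?powR_inv1 ?ltW //; lra.
- have s1' : s - 1 != 0 by rewrite subr_eq0.
  by rewrite scaler0 add0r -[_ *: _]/(_ * _) (_ : s - 1 - 1 = s - 2); [field | ring].
Qed.

End generator.

Section half_shift.
Context {R : realType}.
Implicit Types (s t x : R).

Definition psi s x := phi s ((x + 1) / 2).
Definition dpsi s x := dphi s ((x + 1) / 2) / 2.
Definition ddpsi s x := powR ((x + 1) / 2) (s - 2) / 4.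

Let is_derive_half_shift x : is_derive x 1 (fun y : R => (y + 1) / 2) 2^-1.
Proof. by apply: is_derive_eq; rewrite !scaler0 add0r addr0 scaler1. Qed.

Lemma is_derive_psi s {x} : -1 < x -> is_derive x 1 (psi s) (dpsi s x).
Proof.
move=> x1; have A0 : 0 < (x + 1) / 2 by lra.
have ? := is_derive1_comp (g := fun y => (y + 1) / 2)
  (is_derive_phi s A0) (is_derive_half_shift x).
by rewrite /psi; apply: is_derive_eq; rewrite /dpsi mulrC.
Qed.

Lemma is_derive_dpsi s {x} : -1 < x -> is_derive x 1 (dpsi s) (ddpsi s x).
Proof.
move=> x1; have A0 : 0 < (x + 1) / 2 by lra.
have ? := is_derive1_comp (g := fun y => (y + 1) / 2)
  (is_derive_dphi s A0) (is_derive_half_shift x).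
rewrite /dpsi; apply: is_derive_eq.
by rewrite !scaler0 add0r -[_ *: _]/(_ * _) /ddpsi; field.
Qed.

Lemma psi1 s : psi s 1 = 0.
Proof. by rewrite /psi (_ : (1 + 1) / 2 = 1) ?phi1 //; field. Qed.

End half_shift.

Lemma Omega_phi {R : realType} {n : nat} (s : R) {u v : 'I_n -> R} :
  in_Gamma u -> (forall i, 0 < v i) ->
  Omega s u v = \sum_(i < n) u i * phi s ((u i + v i) / (2 * u i)).
Proof.
move=> [u_gt0 su] v_gt0; rewrite /Omega /phi.
have pos i : 0 < (u i + v i) / (2 * u i).
  by have := u_gt0 i; have := v_gt0 i => *; apply: divr_gt0; lra.
case: eqP => [_|_]; [|case: eqP => [_|_]].
- by apply: eq_bigr => i _; rewrite -lnV ?posrE ?pos // invf_div.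
- apply: eq_bigr => i _; rewrite mulrA; congr (_ * _).
  by have := u_gt0 i => ?; field; rewrite lt0r_neq0.
- transitivity (\sum_(i < n) (s * (s - 1))^-1 *
      (u i * ((u i + v i) / (2 * u i)) `^ s - u i)).
    by rewrite -mulr_sumr sumrB su.
  by apply: eq_bigr => i _; ring.
Qed.

Section csiszar_form.
Context {R : realType} {n : nat} {p q : 'I_n -> R}.
Hypotheses (Gp : in_Gamma p) (Gq : in_Gamma q).

Lemma Omega_qp s : Omega s q p = \sum_(i < n) q i * psi s (p i / q i).
Proof.
rewrite (Omega_phi s Gq Gp.1); apply: eq_bigr => i _; rewrite /psi.
by have := Gq.1 i => ?; congr (_ * phi s _); field; rewrite lt0r_neq0.
Qed.

Lemma Omega_pq t : Omega t p q = \sum_(i < n) q i * perspective (psi t) (p i / q i).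
Proof.
rewrite (Omega_phi t Gp Gq.1); apply: eq_bigr => i _.
have q0 := Gq.1 i; rewrite /perspective /psi mulrA [q i * _]mulrC divfK ?gt_eqF //.
by have := Gp.1 i => ?; congr (_ * phi t _); field; rewrite !lt0r_neq0.
Qed.

End csiszar_form.

Section weight.
Context {R : realType}.
Variables (s t : R).
Implicit Types (x y : R).

Definition weight x := powR x (t + 1) * powR ((x + 1) / 2) (s - t).

Lemma weight_expR x : 0 < x ->
  weight x = expR ((t + 1) * (ln x - ln ((x + 1) / 2)) + (s + 1) * ln ((x + 1) / 2)).
Proof.
move=> x0; have A0 : 0 < (x + 1) / 2 by lra.
by rewrite /weight /powR !gt_eqF // -expRD; congr expR; ring.
Qed.

Let ln_ratio_le x y : 0 < x -> x <= y -> ln x - ln ((x + 1) / 2) <= ln y - ln ((y + 1) / 2).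
Proof.
move=> x0 xy; have y0 : 0 < y by lra.
rewrite -!lnV ?posrE; try lra.
rewrite -!lnM ?posrE ?invr_gt0; try lra.
rewrite ler_ln ?posrE; try (apply: mulr_gt0; rewrite ?invr_gt0; lra).
rewrite !invf_div !mulrA ler_pdivrMr; last lra.
by rewrite mulrAC ler_pdivlMr; nra.
Qed.

Let ln_half_le x y : 0 < x -> x <= y -> ln ((x + 1) / 2) <= ln ((y + 1) / 2).
Proof. by move=> x0 xy; rewrite ler_ln ?posrE; lra. Qed.

Lemma weight_nondecreasing x y : -1 <= s -> -1 <= t -> 0 < x -> x <= y ->
  weight x <= weight y.
Proof.
move=> s1 t1 x0 xy; rewrite !weight_expR ?ler_expR; try lra.
by apply: lerD; apply: ler_wpM2l; rewrite ?ln_ratio_le ?ln_half_le //; lra.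
Qed.

Lemma weight_nonincreasing x y : s <= -1 -> t <= -1 -> 0 < x -> x <= y ->
  weight y <= weight x.
Proof.
move=> s1 t1 x0 xy; rewrite !weight_expR ?ler_expR; try lra.
by apply: lerD; apply: ler_wnM2l; rewrite ?ln_ratio_le ?ln_half_le //; lra.
Qed.

Lemma ddpsi_weight {x} : 0 < x -> ddpsi s x = weight x * (ddpsi t x^-1 / x ^+ 3).
Proof.
move=> x0; have x1 : 0 < x + 1 by lra.
have A0 : 0 < (x + 1) / 2 by lra.
have xA : (x^-1 + 1) / 2 = (x + 1) / 2 / x by field; rewrite lt0r_neq0.
rewrite /ddpsi xA -(powR_mulrn 3 (ltW x0)) /weight /powR !gt_eqF ?divr_gt0 //.
rewrite [ln (_ / x)]lnM ?posrE ?invr_gt0 // lnV ?posrE //.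
set la := ln ((x + 1) / 2); set lx := ln x.
rewrite (_ : (s - 2) * la = (t + 1) * lx + (s - t) * la + (t - 2) * (la + - lx) - 3%:R * lx);
  last by ring.
by rewrite expRD expRN !expRD; field; rewrite gt_eqF ?expR_gt0.
Qed.

End weight.

Section Omega_comparison.
Context {R : realType} {n : nat} {p q : 'I_n -> R} {r Rb s t m : R}.
Hypotheses (Gp : in_Gamma p) (Gq : in_Gamma q) (r_gt0 : 0 < r).
Hypothesis ratio_in : forall i, r <= p i / q i <= Rb.

Let pos (y : R) : y \in `[r, Rb] -> 0 < y.
Proof. by rewrite in_itv /= => /andP[ry _]; apply: lt_le_trans ry. Qed.

Let psi_t_d (y : R) : 0 < y -> is_derive y 1 (psi t) (dpsi t y).
Proof. by move=> y0; apply: is_derive_psi; lra. Qed.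

Let dpsi_t_d (y : R) : 0 < y -> is_derive y 1 (dpsi t) (ddpsi t y).
Proof. by move=> y0; apply: is_derive_dpsi; lra. Qed.

Let scaled_d (y : R) : y \in `[r, Rb] -> is_derive y 1 (fun y => m * perspective (psi t) y)
  (m * (psi t y^-1 - dpsi t y^-1 / y)).
Proof.
move=> /pos y0; have ? := is_derive_perspective psi_t_d y0.
by apply: is_derive_eq.
Qed.

Let scaled_dd (y : R) : y \in `[r, Rb] ->
  is_derive y 1 (fun y => m * (psi t y^-1 - dpsi t y^-1 / y)) (m * (ddpsi t y^-1 / y ^+ 3)).
Proof.
move=> /pos y0; have ? := is_derive_perspective' psi_t_d dpsi_t_d y0.
by apply: is_derive_eq.
Qed.

Let dpsi_s_d (y : R) : y \in `[r, Rb] -> is_derive y 1 (dpsi s) (ddpsi s y).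
Proof. by move=> /pos y0; apply: is_derive_dpsi; lra. Qed.

Let psi_s_d (y : R) : y \in `[r, Rb] -> is_derive y 1 (psi s) (dpsi s y).
Proof. by move=> /pos y0; apply: is_derive_psi; lra. Qed.

Let second_derivative_ratio (y : R) : y \in `[r, Rb] ->
  ddpsi s y = weight s t y * (ddpsi t y^-1 / y ^+ 3) /\ 0 <= ddpsi t y^-1 / y ^+ 3.
Proof.
move=> /pos y0; split; first exact: ddpsi_weight.
apply: divr_ge0; last by rewrite exprn_ge0 // ltW.
by apply: divr_ge0; rewrite ?powR_ge0.
Qed.

Let one_value : m * perspective (psi t) 1 = psi s 1.
Proof. by rewrite /perspective invr1 !psi1 !mulr0. Qed.

Let m_Omega_pq : m * Omega t p q = \sum_(i < n) q i * (m * perspective (psi t) (p i / q i)).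
Proof. by rewrite (Omega_pq Gp Gq) mulr_sumr; under eq_bigr do rewrite mulrCA. Qed.

Lemma Omega_ge_scaled : {in `[r, Rb], forall y, m <= weight s t y} ->
  m * Omega t p q <= Omega s q p.
Proof.
move=> m_le; rewrite m_Omega_pq (Omega_qp Gp Gq).
apply: (csiszar_sum_le Gp Gq ratio_in scaled_d scaled_dd psi_s_d dpsi_s_d) => // y yr.
by have [-> K0] := second_derivative_ratio _ yr; rewrite ler_wpM2r ?m_le.
Qed.

Lemma Omega_le_scaled : {in `[r, Rb], forall y, weight s t y <= m} ->
  Omega s q p <= m * Omega t p q.
Proof.
move=> le_m; rewrite m_Omega_pq (Omega_qp Gp Gq).
apply: (csiszar_sum_le Gp Gq ratio_in psi_s_d dpsi_s_d scaled_d scaled_dd) => // y yr.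
by have [-> K0] := second_derivative_ratio _ yr; rewrite ler_wpM2r ?le_m.
Qed.

End Omega_comparison.

Theorem theorem4p1 (R : realType) (n : nat) (p q : 'I_n -> R) (r Rb s t : R) :
  (2 <= n)%N -> in_Gamma p -> in_Gamma q ->
  0 < r -> r <= Rb ->
  (forall i, r <= p i / q i <= Rb) ->
  ((-1 <= s -> -1 <= t ->
     powR r (t + 1) * powR ((r + 1) / 2) (s - t) * Omega t p q <= Omega s q p /\
     Omega s q p <= powR Rb (t + 1) * powR ((Rb + 1) / 2) (s - t) * Omega t p q) /\
   (s <= -1 -> t <= -1 ->
     powR Rb (t + 1) * powR ((Rb + 1) / 2) (s - t) * Omega t p q <= Omega s q p /\
     Omega s q p <= powR r (t + 1) * powR ((r + 1) / 2) (s - t) * Omega t p q)).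
Proof.
move=> _ Gp Gq r_gt0 _ ratio_in.
have in_r y : y \in `[r, Rb] -> 0 < r <= y by rewrite in_itv /= r_gt0 => /andP[].
have in_Rb y : y \in `[r, Rb] -> 0 < y <= Rb.
  by rewrite in_itv /= => /andP[ry ->]; rewrite (lt_le_trans r_gt0 ry).
split=> s1 t1; split.
- apply: (Omega_ge_scaled Gp Gq r_gt0 ratio_in) => y /in_r /andP[r0 ry].
  exact: weight_nondecreasing.
- apply: (Omega_le_scaled Gp Gq r_gt0 ratio_in) => y /in_Rb /andP[y0 yR].
  exact: weight_nondecreasing.
- apply: (Omega_ge_scaled Gp Gq r_gt0 ratio_in) => y /in_Rb /andP[y0 yR].
  exact: weight_nonincreasing.
- apply: (Omega_le_scaled Gp Gq r_gt0 ratio_in) => y /in_r /andP[r0 ry].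
  exact: weight_nonincreasing.
Qed.
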